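(* Let $X$ be a complex manifold. (a) The set of tame pairs is generic (residual) in $X\times{\operatorname{Aut}}\,X$. (b) For a generic automorphism $f\in{\operatorname{Aut}}\,X$, a generic point of $X$ is tame for $f$.
   Context: ${\operatorname{Aut}}\,X$ is the group of holomorphic automorphisms of $X$ with the compact-open topology (a Polish group). For compact $K\subset X$ let $T_K^+=\{(x,g)\in X\times{\operatorname{Aut}}\,X: g^j(x)\in K\text{ for all } j\geq0\}$ and $T_K^-=\{(x,g)\in X\times{\operatorname{Aut}}\,X: g^j(x)\in K\text{ for all } j\leq0\}$. A pair $(p,f)\in X\times {\operatorname{Aut}}\,X$ is tame (equivalently, $p$ is tame for $f$) if whenever $(p,f)$ lies in the interior of $T_K^+\cup T_K^-$ for some compact $K\subset X$, then $(p,f)$ lies in $\operatorname{int}(T_L^+)\cup\operatorname{int}(T_L^-)$ for some compact $L\subset X$. Generic means residual. *)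

From HB Require Import structures.
From mathcomp Require Import all_boot all_order all_algebra.
From mathcomp Require Import all_classical all_reals all_analysis.
From mathcomp Require Import Rstruct Rstruct_topology.
Set Implicit Arguments. Unset Strict Implicit. Unset Printing Implicit Defensive.
Import Order.TTheory GRing.Theory Num.Theory.
Import numFieldNormedType.Exports.
Local Open Scope classical_set_scope.
Local Open Scope ring_scope.

(* C^n is identified with R^(n+n) = 'rV[R]_(n+n) : a row vector (x | y)
   stands for the complex vector x + i y.  Multiplication by i is cJ. *)
Definition cJ (R : realType) (n : nat) (v : 'rV[R]_(n + n)) : 'rV[R]_(n + n) :=
  row_mx (- rsubmx v) (lsubmx v).

Definition holo_on (R : realType) (n m : nat) (U : set 'rV[R]_(n + n))
    (h : 'rV[R]_(n + n) -> 'rV[R]_(m + m)) : Prop :=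
  open U /\
  forall z, U z -> differentiable h z /\
    forall v, ('d h z) (cJ v) = cJ (('d h z) v).

Definition is_chart (R : realType) (X : topologicalType) (n : nat)
    (U : set X) (phi : X -> 'rV[R]_(n + n)) : Prop :=
  [/\ open U, {in U &, injective phi}, {within U, continuous phi},
      open (phi @` U) &
      forall V : set X, open V -> V `<=` U -> open (phi @` V)].

Definition holo_atlas (R : realType) (X : topologicalType) (n : nat)
    (A : set (set X * (X -> 'rV[R]_(n + n)))) : Prop :=
  [/\ forall c, A c -> is_chart c.1 c.2,
      forall x : X, exists2 c, A c & c.1 x &
      forall c d, A c -> A d ->
        exists2 h, holo_on (c.2 @` (c.1 `&` d.1)) h &
          forall x, (c.1 `&` d.1) x -> d.2 x = h (c.2 x)].

Record complex_manifold (R : realType) (X : topologicalType) := CManifold {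
  cm_dim : nat;
  cm_atlas : set (set X * (X -> 'rV[R]_(cm_dim + cm_dim)));
  cm_hausdorff : hausdorff_space X;
  cm_second_countable : @second_countable X;
  cm_holo_atlas : holo_atlas cm_atlas }.

Definition holo_map (R : realType) (X : topologicalType)
    (M : complex_manifold R X) (f : X -> X) : Prop :=
  continuous f /\
  forall c d, @cm_atlas _ _ M c -> @cm_atlas _ _ M d ->
    exists2 h, holo_on (c.2 @` (c.1 `&` f @^-1` d.1)) h &
      forall x, (c.1 `&` f @^-1` d.1) x -> d.2 (f x) = h (c.2 x).

Definition is_aut (R : realType) (X : topologicalType)
    (M : complex_manifold R X) (f : X -> X) : Prop :=
  holo_map M f /\ exists2 g, holo_map M g & cancel f g /\ cancel g f.

Definition AutSet (R : realType) (X : topologicalType) (M : complex_manifold R X)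
  : set {compact-open, X -> X} := [set f | is_aut M f].

Definition rel_interior (T : topologicalType) (S A : set T) : set T :=
  [set p | S p /\ exists2 O : set T, open O /\ O p & O `&` S `<=` A].

Definition rel_open_dense (T : topologicalType) (S D : set T) : Prop :=
  (exists2 O : set T, open O & D = O `&` S) /\
  (forall O : set T, open O -> O `&` S !=set0 -> O `&` D !=set0).

Definition residual_in (T : topologicalType) (S A : set T) : Prop :=
  A `<=` S /\
  exists D : nat -> set T, (forall k, rel_open_dense S (D k)) /\
    \bigcap_k D k `<=` A.

Section Tame.
Variables (R : realType) (X : topologicalType) (M : complex_manifold R X).

Definition XAut : Type := (X * {compact-open, X -> X})%type.

Definition XAutSet : set XAut := [set p | AutSet M p.2].

Definition Tplus (K : set X) : set XAut :=
  [set p | XAutSet p /\ forall j : nat, K (iter j p.2 p.1)].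

(* g^j(x) in K for all j <= 0, i.e. every y with g^k(y) = x (k >= 0) is in K *)
Definition Tminus (K : set X) : set XAut :=
  [set p | XAutSet p /\ forall (k : nat) (y : X), iter k p.2 y = p.1 -> K y].

Definition tame (p : X) (f : X -> X) : Prop :=
  forall K : set X, compact K ->
    rel_interior XAutSet (Tplus K `|` Tminus K) (p, f) ->
    exists2 L : set X, compact L &
      (rel_interior XAutSet (Tplus L) (p, f) \/
       rel_interior XAutSet (Tminus L) (p, f)).

End Tame.

From HB Require Import structures.
From mathcomp Require Import all_boot all_order all_algebra.
From mathcomp Require Import all_classical all_reals all_analysis.
From mathcomp Require Import Rstruct Rstruct_topology.
Set Implicit Arguments. Unset Strict Implicit. Unset Printing Implicit Defensive.
Import Order.TTheory GRing.Theory Num.Theory.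
Import numFieldNormedType.Exports.
Local Open Scope classical_set_scope.
Local Open Scope ring_scope.

(* Charts make [X] locally compact, so [(x, g) |-> g^j x] is continuous on
   [X * Aut X] for the compact-open topology and [T^+_K] is relatively closed for
   compact [K].  Hence the pairs near which membership in [T^+_K] is locally
   constant form a relatively open dense set.  Take compact sets [K_n] such that
   every compact set lies in some [K_n]; a pair in all these open dense sets is
   tame: either [T^+_(K_n)] is a neighbourhood of it, or nearby no pair lies in
   [T^+_(K_n)], which contains [T^+_K], so [T^+_K \cup T^-_K] reduces to
   [T^-_K] there.  Part (b) follows from (a) by a Kuratowski--Ulam argument:
   with a countable basis [(e_m)] of [X], the automorphisms [f] whose slice of
   each open dense set meets every [e_m] form a residual set. *)

Lemma closed_ball_rV_compact (R : realType) k (y : 'rV[R]_k) (r : R) :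
  0 < r -> compact (closed_ball y r).
Proof.
move=> r0; apply: bounded_closed_compact; last exact: closed_ball_closed.
exists (`|y| + r); split; first by rewrite realE addr_ge0 // ltW.
move=> M /ltW leM z; rewrite closed_ballE //= => yz; apply: le_trans leM.
by rewrite -[z](subrK y) (le_trans (ler_normD _ _)) // addrC lerD2l distrC.
Qed.

Section open_embedding.
Variables (X Y : topologicalType) (V : set X) (phi : X -> Y).
Hypotheses (V_open : open V) (phi_inj : {in V &, injective phi})
  (phi_open : forall W, open W -> W `<=` V -> open (phi @` W)).

Lemma compact_open_embedding_preimage (K : set Y) :
  compact K -> K `<=` phi @` V -> compact (V `&` phi @^-1` K).
Proof.
move=> cK KV F PF FC.
have Fphi : F (phi @^-1` K) by apply: filterS FC => z [].
have [w [Kw clw]] := cK (phi @ F) (fmap_proper_filter phi PF) Fphi.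
have [z Vz zw] := KV _ Kw.
exists z; split; first by split => //=; rewrite zw.
move=> A N FA; rewrite nbhsE => -[N0 [oN0 N0z] N0N].
have Fimg : F (phi @^-1` (phi @` (A `&` (V `&` phi @^-1` K)))).
  by apply: filterS (filterI FA FC) => t At; exists t.
have Nw : nbhs w (phi @` (N0 `&` V)).
  apply: open_nbhs_nbhs; split; last by exists z.
  by apply: phi_open; [exact: openI | exact: subIsetr].
have [_ [[a [Aa [Va _]] <-] [n [N0n Vn] na]]] := clw _ _ Fimg Nw.
have an : a = n by apply: phi_inj; rewrite ?inE.
by exists a; split => //; apply: N0N; rewrite an.
Qed.

End open_embedding.

Definition compact_nbhs_basis (X : topologicalType) :=
  forall (x : X) (W : set X), open W -> W x ->
    exists C : set X, [/\ compact C, nbhs x C & C `<=` W].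

Lemma chart_compact_nbhs (R : realType) (X : topologicalType) n (U : set X)
    (phi : X -> 'rV[R]_(n + n)) (x : X) (W : set X) :
  is_chart U phi -> U x -> open W -> W x ->
  exists C : set X, [/\ compact C, nbhs x C & C `<=` W].
Proof.
move=> [oU phi_inj phi_cont _ phi_open] Ux oW Wx.
have oWU : open (W `&` U) by exact: openI.
have /nbhs_closedballP[r rWU] : nbhs (phi x) (phi @` (W `&` U)).
  apply: open_nbhs_nbhs; split; last by exists x.
  by apply: phi_open => //; exact: subIsetr.
exists (W `&` U `&` phi @^-1` closed_ball (phi x) r%:num); split.
- apply: (@compact_open_embedding_preimage _ _ _ phi oWU _ _ _ _ rWU).
  + by move=> a b /[!inE] -[_ Ua] [_ Ub]; apply: phi_inj; rewrite inE.
  + by move=> V oV VWU; apply: phi_open => // t /VWU [].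
  + exact: closed_ball_rV_compact.
- have phi_x : {for x, continuous phi}.
    by move: phi_cont; rewrite continuous_open_subspace // => /(_ x (mem_set Ux)).
  have /phi_x xball : nbhs (phi x) (ball (phi x) r%:num) by exact: nbhsx_ballx.
  apply: filterS (filterI (open_nbhs_nbhs (conj oWU (conj Wx Ux))) xball).
  by move=> t [WUt bt]; split => //; exact: subset_closure.
- by move=> t [[]].
Qed.

Lemma cm_compact_nbhs_basis (R : realType) (X : topologicalType)
    (M : complex_manifold R X) : compact_nbhs_basis X.
Proof.
move=> x W.
have [is_ch cover _] := cm_holo_atlas M.
have [[U phi] /is_ch ch Ux] := cover x.
exact: chart_compact_nbhs ch Ux.
Qed.

Section evaluation.
Variable X : topologicalType.
Hypothesis X_cnbhs : compact_nbhs_basis X.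

Lemma eval_continuous_at (Y : topologicalType) (g : {compact-open, X -> Y}) (z : X) :
  continuous (g : X -> Y) ->
  {for (z, g), continuous (fun q : X * {compact-open, X -> Y} => q.2 q.1)}.
Proof.
move=> g_cont B /=; rewrite nbhsE => -[V [oV Vgz] VB].
have [C [cC Cz CgV]] := X_cnbhs (open_comp (fun t _ => g_cont t) oV) Vgz.
exists (C, [set h : {compact-open, X -> Y} | h @` C `<=` V]).
  split => //=; apply: open_nbhs_nbhs; split; first exact: compact_open_open.
  by move=> _ [t Ct <-]; exact: CgV.
by case=> a h /= [Ca hCV]; apply: VB; apply: hCV; exists a.
Qed.

Lemma iter_continuous_at (g : {compact-open, X -> X}) (x : X) (j : nat) :
  continuous (g : X -> X) ->
  {for (x, g), continuous (fun q : X * {compact-open, X -> X} => iter j q.2 q.1)}.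
Proof.
move=> g_cont; elim: j => [|j IH] /=; first exact: cvg_fst.
exact: (continuous_comp (cvg_pair IH cvg_snd) (eval_continuous_at _)).
Qed.

End evaluation.

Section residual.
Variables (T : topologicalType) (S : set T).

Lemma rel_open_dense_sub (D : set T) : rel_open_dense S D -> D `<=` S.
Proof. by case=> -[U _ ->] _ t []. Qed.

Lemma rel_open_dense_self : rel_open_dense S S.
Proof. by split; [exists setT; [exact: openT | rewrite setTI] | ]. Qed.

Lemma residual_in_bigcap (J : countType) (D : J -> set T) :
  (forall i, rel_open_dense S (D i)) -> residual_in S (S `&` \bigcap_i D i).
Proof.
move=> D_dense; split; first exact: subIsetl.
pose E k := if unpickle k is Some i then D i else S.
have E_dense k : rel_open_dense S (E k).
  by rewrite /E; case: (unpickle k) => [i|]; [exact: D_dense | exact: rel_open_dense_self].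
exists E; split => // t Et; split.
  by apply: (rel_open_dense_sub (E_dense 0%N)); exact: Et.
by move=> i _; have := Et (pickle i) I; rewrite /E pickleK.
Qed.

Lemma residual_in_sub (A B : set T) :
  residual_in S A -> A `<=` B -> B `<=` S -> residual_in S B.
Proof. by move=> [_ [D [D_dense DA]]] AB BS; split => //; exists D; split => // t /DA/AB. Qed.

Definition loc_const (A : set T) : set T :=
  [set q | exists2 U : set T, open_nbhs q U &
     U `&` S `<=` A \/ U `&` S `<=` ~` A].

Lemma open_loc_const (A : set T) : open (loc_const A).
Proof.
rewrite openE => q [U [oU Uq] UA].
by apply: filterS (open_nbhs_nbhs (conj oU Uq)) => t Ot; exists U.
Qed.

Lemma loc_const_rel_open_dense (A : set T) :
  (forall q, S q -> ~ A q -> exists2 U : set T, open_nbhs q U & U `<=` ~` A) ->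
  rel_open_dense S (loc_const A `&` S).
Proof.
move=> A_rel_closed; split; first by exists (loc_const A) => //; exact: open_loc_const.
move=> W oW [q0 [Wq0 Sq0]].
have [WA|] := pselect (W `&` S `<=` A).
  by exists q0; split => //; split => //; exists W => //; left.
move=> /existsNP[q /not_implyP[[Wq Sq] nAq]].
have [U [oU Uq] UnA] := A_rel_closed q Sq nAq.
by exists q; split => //; split => //; exists U => //; right => t [/UnA].
Qed.

End residual.

Lemma second_countable_basis_seq (X : topologicalType) : @second_countable X ->
  exists e : nat -> set X, (forall m, open (e m)) /\
    (forall x W, nbhs x W -> exists m, e m x /\ e m `<=` W).
Proof.
move=> [B cB [Bo Bnbhs]].
have [f f_inj] := countable_injP _ cB.
exists (fun m => [set x | exists2 V, B V /\ f V = m & V x]); split.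
- move=> m; rewrite openE => x [V [BV fV] Vx].
  by apply: filterS (open_nbhs_nbhs (conj (Bo _ BV) Vx)) => t Vt; exists V.
- move=> x W /Bnbhs[V [BV Vx] VW].
  exists (f V); split; first by exists V.
  move=> t [V' [BV' fV'] V't]; apply: VW.
  by rewrite (f_inj V V') ?inE.
Qed.

Section compact_exhaustion.
Variable X : topologicalType.
Hypotheses (X_hausdorff : hausdorff_space X) (X_cnbhs : compact_nbhs_basis X).

Definition compact_exhaustion (e : nat -> set X) (n : nat) : set X :=
  \big[setU/set0]_(m < n | `[< compact (closure (e m)) >]) closure (e m).

Lemma compact_exhaustion_compact (e : nat -> set X) n : compact (compact_exhaustion e n).
Proof. by apply: bigsetU_compact => m /asboolP. Qed.

Lemma compact_sub_exhaustion (e : nat -> set X) :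
  (forall m, open (e m)) ->
  (forall x W, nbhs x W -> exists m, e m x /\ e m `<=` W) ->
  forall K, compact K -> exists n, K `<=` compact_exhaustion e n.
Proof.
move=> e_open e_basis K cK.
suff: \forall n \near \oo, K `<=` compact_exhaustion e n.
  by move=> [N _ KN]; exists N; apply: KN => /=.
apply: ((compact_near_coveringP K).1 cK _ \oo (compact_exhaustion e) _) => x Kx.
have [C [cC Cx _]] := X_cnbhs openT (I : setT x).
have [m [emx emC]] := e_basis x C Cx.
have cm : compact (closure (e m)).
  have emC' : closure (e m) `<=` C.
    rewrite (closure_id C).1; [exact: closureS | exact: compact_closed X_hausdorff cC].
  exact: subclosed_compact (@closed_closure _ (e m)) cC emC'.
exists (e m, [set n | (m < n)%N]).
  split => /=; first exact: open_nbhs_nbhs.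
  by exists m.+1.
case=> x' n /= [emx' mn].
rewrite /compact_exhaustion (bigD1 (Ordinal mn)) /=; last exact/asboolP.
by left; exact: subset_closure.
Qed.

End compact_exhaustion.

Section tame_pairs.
Variables (R : realType) (X : topologicalType) (M : complex_manifold R X).

Lemma cm_compact_exhaustion : exists2 Kn : nat -> set X,
  forall n, compact (Kn n) & forall K, compact K -> exists n, K `<=` Kn n.
Proof.
have [e [e_open e_basis]] := second_countable_basis_seq (cm_second_countable M).
exists (compact_exhaustion e) => [n|]; first exact: compact_exhaustion_compact.
exact: (compact_sub_exhaustion (cm_hausdorff M) (cm_compact_nbhs_basis M) e_open e_basis).
Qed.

Lemma Tplus_subset (K L : set X) : K `<=` L -> Tplus M K `<=` Tplus M L.
Proof. by move=> KL q [Sq qK]; split => // j; apply: KL. Qed.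

(* An orbit leaving the closed set [K] does so at a finite time [j], which is an
   open condition by continuity of [(x, g) |-> g^j x]. *)
Lemma Tplus_rel_closed (K : set X) : closed K -> forall q : XAut X,
  XAutSet M q -> ~ Tplus M K q ->
  exists2 V : set (XAut X), open_nbhs q V & V `<=` ~` Tplus M K.
Proof.
move=> clK [x g] Sq nTq.
have [j gjx] : exists j, ~ K (iter j g x) by apply/existsNP => qK; apply: nTq.
have g_cont : continuous (g : X -> X) by case: Sq => -[].
have : nbhs (x, g) ((fun q : XAut X => iter j q.2 q.1) @^-1` (~` K)).
  apply: (@iter_continuous_at _ (cm_compact_nbhs_basis M) g x j g_cont).
  by apply: open_nbhs_nbhs; split => //; rewrite openC.
by rewrite nbhsE => -[V qV VK]; exists V => // q' /VK nK' [_ /(_ j)].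
Qed.

Lemma Tplus_loc_const_rel_open_dense (K : set X) : compact K ->
  rel_open_dense (XAutSet M) (loc_const (XAutSet M) (Tplus M K) `&` XAutSet M).
Proof.
move=> cK; apply: loc_const_rel_open_dense.
exact/Tplus_rel_closed/(compact_closed (cm_hausdorff M)).
Qed.

(* On a neighbourhood where no pair lies in [T^+] of the large compact set,
   the pairs of [T^+_K \cup T^-_K] all lie in [T^-_K]. *)
Lemma tame_of_loc_const (Kn : nat -> set X) :
  (forall n, compact (Kn n)) -> (forall K, compact K -> exists n, K `<=` Kn n) ->
  forall q : XAut X, XAutSet M q ->
  (forall n, loc_const (XAutSet M) (Tplus M (Kn n)) q) -> tame M q.1 q.2.
Proof.
move=> Kn_compact Kn_exhaust [p f] Sq q_loc K cK [_ [V [oV Vq] VT]].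
have [n KKn] := Kn_exhaust K cK.
have [U [oU Uq] [UT|UnT]] := q_loc n.
  by exists (Kn n) => //; left; split => //; exists U.
exists K => //; right; split => //; exists (V `&` U); first by split => //; exact: openI.
move=> q' [[Vq' Uq'] Sq'].
have [] := VT q' (conj Vq' Sq') => // /(Tplus_subset KKn) Tq'.
by case: (UnT q' (conj Uq' Sq')).
Qed.

End tame_pairs.

Section slices.
Variables (X Y : topologicalType) (S : set Y).

Lemma open_slice (P : set (X * Y)) (f : Y) : open P -> open [set p | P (p, f)].
Proof.
move=> oP; rewrite openE => p Pp.
case: (open_nbhs_nbhs (conj oP Pp)) => -[A B] /= [pA fB] AB.
apply: filterS pA => p' Ap'.
by apply: (AB (p', f)); split => //; exact: nbhs_singleton.
Qed.

Definition slice_meets (P : set (X * Y)) (U : set X) : set Y :=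
  [set f | S f /\ (U !=set0 -> exists2 p, U p & P (p, f))].

Lemma slice_meets_rel_open_dense (P : set (X * Y)) (U : set X) :
  open P -> rel_open_dense [set q | S q.2] (P `&` [set q | S q.2]) ->
  open U -> rel_open_dense S (slice_meets P U).
Proof.
move=> oP [_ P_dense] oU; have [U0|U_empty] := pselect (U !=set0); split.
- exists [set f | exists2 p, U p & P (p, f)].
    rewrite openE => f [p Up Ppf].
    case: (open_nbhs_nbhs (conj oP Ppf)) => -[A B] /= [pA fB] AB.
    apply: filterS fB => f' Bf'; exists p => //.
    by apply: (AB (p, f')); split => //; exact: nbhs_singleton.
  by apply/seteqP; split => f; [case=> Sf /(_ U0) | case=> Pf Sf; split => // _].
- move=> W oW [f0 [Wf0 Sf0]]; have [p0 Up0] := U0.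
  have oUW : open (U `*` W).
    rewrite openE => -[p f] [Up Wf].
    by exists (U, W) => //; split; exact: open_nbhs_nbhs.
  have UWS0 : (U `*` W) `&` [set q | S q.2] !=set0 by exists (p0, f0).
  have [[p f] [[/= Up Wf] [Ppf Sf]]] := P_dense _ oUW UWS0.
  by exists f; split => //; split => // _; exists p.
- exists setT; first exact: openT.
  by apply/seteqP; split => f; [case | move=> [_ Sf]; split => // /U_empty].
- by move=> W oW [f [Wf Sf]]; exists f; split => //; split => // /U_empty.
Qed.

Lemma slice_rel_open_dense (P : set (X * Y)) (e : nat -> set X) (f : Y) :
  open P -> (forall x W, nbhs x W -> exists m, e m x /\ e m `<=` W) ->
  (forall m, slice_meets P (e m) f) -> rel_open_dense [set: X] [set p | P (p, f)].
Proof.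
move=> oP e_basis f_meets; split.
  by exists [set p | P (p, f)]; [exact: open_slice | rewrite setIT].
move=> W oW [x [Wx _]].
have [m [emx emW]] := e_basis x W (open_nbhs_nbhs (conj oW Wx)).
have [_ /(_ (ex_intro _ x emx))[p emp Ppf]] := f_meets m.
by exists p; split => //; exact: emW.
Qed.

Lemma residual_slices (P : nat -> set (X * Y)) : @second_countable X ->
  (forall n, open (P n)) ->
  (forall n, rel_open_dense [set q | S q.2] (P n `&` [set q | S q.2])) ->
  exists2 G : set Y, residual_in S G &
    forall f, G f -> residual_in [set: X] [set p | forall n, P n (p, f)].
Proof.
move=> /second_countable_basis_seq[e [e_open e_basis]] P_open P_dense.
pose D (nm : nat * nat) := slice_meets (P nm.1) (e nm.2).
exists (S `&` \bigcap_nm D nm).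
  apply: residual_in_bigcap => -[n m].
  exact: slice_meets_rel_open_dense (P_open n) (P_dense n) (e_open m).
move=> f [_ Df].
have f_slices n : rel_open_dense [set: X] [set p | P n (p, f)].
  by apply: (slice_rel_open_dense (P_open n) e_basis) => m; exact: (Df (n, m)).
apply: residual_in_sub (residual_in_bigcap f_slices) _ _ => // p [_ Pp] n.
exact: Pp.
Qed.

End slices.

Unset Implicit Arguments.

Theorem mainTheorem2 (X : topologicalType)
    (M : complex_manifold Rdefinitions.R X) :
  residual_in (XAutSet M) [set q : XAut X | XAutSet M q /\ tame M q.1 q.2] /\
  exists2 G : set {compact-open, X -> X},
    residual_in (AutSet M) G &
    forall f, G f -> residual_in [set: X] [set p | tame M p f].
Proof.
have [Kn Kn_compact Kn_exhaust] := cm_compact_exhaustion M.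
pose P n := loc_const (XAutSet M) (Tplus M (Kn n)).
have P_open n : open (P n) := open_loc_const _ _.
have P_dense n : rel_open_dense (XAutSet M) (P n `&` XAutSet M) :=
  Tplus_loc_const_rel_open_dense M (Kn_compact n).
have P_tame q (Sq : XAutSet M q) (Pq : forall n, P n q) : tame M q.1 q.2 :=
  tame_of_loc_const Kn_compact Kn_exhaust Sq Pq.
split.
  apply: residual_in_sub (residual_in_bigcap P_dense) _ _ => [q [Sq Pq]|q []//].
  by split => //; apply: P_tame => // n; case: (Pq n I).
have [G G_res G_slices] := residual_slices (cm_second_countable M) P_open P_dense.
exists G => // f Gf; apply: residual_in_sub (G_slices f Gf) _ _ => // p Pp.
by apply: P_tame => //; exact: G_res.1.
Qed.
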